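(* Let $d\ge2$, $n=3$, and $\mathcal T=\sum_{k=1}^4\mathbf v_k^{\otimes d}$. (i) If $d=2$, every unit vector $\mathbf v\in\mathbb R^3$ is an eigenvector with eigenvalue $\frac43$. (ii) If $d\ge3$ is odd, a unit vector $\mathbf v\in\mathbb R^3$ is an eigenvector of $\mathcal T$ if and only if there is a nonempty $K\subset\{1,2,3,4\}$ with $|K|\le3$ such that $\mathbf v=\sum_{k\in K}\mathbf v_k\big/\sqrt{|K|(4-|K|)/3}$, with eigenvalue $\mu=\dfrac{(4-|K|)^{d-1}-|K|^{d-1}}{3^{d/2}(|K|(4-|K|))^{d/2-1}}$. Moreover $\mu=0$ if and only if $|K|=2$, and the normalized eigenvectors with eigenvalue $0$ are, up to sign, exactly the three linearly independent vectors $(\mathbf v_1+\mathbf v_2)/\sqrt{4/3}$, $(\mathbf v_1+\mathbf v_3)/\sqrt{4/3}$, $(\mathbf v_1+\mathbf v_4)/\sqrt{4/3}$. (iii) If $d\ge4$ is even, a unit vector $\mathbf v\in\mathbb R^3$ is an eigenvector of $\mathcal T$ if and only if either (a) there is a nonempty $K\subset\{1,2,3,4\}$ with $|K|\le3$ such that $\mathbf v=\sum_{k\in K}\mathbf v_k/\sqrt{|K|(4-|K|)/3}$, with positive eigenvalue $\mu=\dfrac{(4-|K|)^{d-1}+|K|^{d-1}}{3^{d/2}(|K|(4-|K|))^{d/2-1}}$; or (b) there are nonempty disjoint $K_1,K_2\subset\{1,2,3,4\}$ with $|K_1\cup K_2|\le3$ and numbers $0<a\le s^*<b\le1$ with $|K_1|a+|K_2|b=1$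 and $g(a)/a=g(b)/b$, such that $\mathbf v=\big(a\sum_{k\in K_1}\mathbf v_k+b\sum_{k\in K_2}\mathbf v_k\big)\big/\sqrt{(4a^2|K_1|+4b^2|K_2|-1)/3}$, with positive eigenvalue $\mu=\dfrac{|K_1|(4a-1)^d+|K_2|(4b-1)^d+4-|K_1|-|K_2|}{3^{d/2}(4a^2|K_1|+4b^2|K_2|-1)^{d/2}}$.
   Context: Simplex frame for $n=3$: $\mathbf v_k=\sqrt{4/3}\,\mathbf e_k-3^{-3/2}\,\mathbf 1_3$ for $k=1,2,3$ and $\mathbf v_4=-\frac1{\sqrt3}\mathbf 1_3$, where $\mathbf e_k$ are unit vectors of $\mathbb R^3$ and $\mathbf 1_3=(1,1,1)^\top$; these are unit vectors with pairwise inner product $-\frac13$ and sum $\mathbf 0$. $\mathcal T\cdot\mathbf v^{d-1}=\sum_{k=1}^4\langle\mathbf v,\mathbf v_k\rangle^{d-1}\mathbf v_k$; $\mathbf v\ne\mathbf 0$ is an eigenvector with eigenvalue $\mu$ if $\mathcal T\cdot\mathbf v^{d-1}=\mu\mathbf v$. $g(s)=(4s-1)^{d-1}-(-1)^{d-1}$, and for even $d\ge4$, $s^*\in[\frac13,\frac12)$ is the unique point such that $g(s)/s$ is strictly decreasing on $[0,s^*]$ and strictly increasing on $[s^*,\infty)$. *)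

From HB Require Import structures.
From mathcomp Require Import all_boot all_order all_algebra.
From mathcomp Require Import reals.
Set Implicit Arguments. Unset Strict Implicit. Unset Printing Implicit Defensive.
Import Order.TTheory GRing.Theory Num.Theory.
Local Open Scope ring_scope.

Section SimplexFrame.
Context {R : realType}.

Definition dot (u v : 'rV[R]_3) : R := \sum_(i < 3) u 0 i * v 0 i.

Definition unitv (v : 'rV[R]_3) : Prop := dot v v = 1.

(* simplex frame: k = 0,1,2 correspond to v_1,v_2,v_3; k = 3 to v_4 *)
Definition vk (k : 'I_4) : 'rV[R]_3 :=
  if (k < 3)%N then
    Num.sqrt (4 / 3) *: delta_mx 0 (inord k : 'I_3)
      - (3 * Num.sqrt 3)^-1 *: const_mx 1
  else - (Num.sqrt 3)^-1 *: const_mx 1.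

(* T . v^{d-1} = sum_k <v, v_k>^{d-1} v_k *)
Definition Tapply (d : nat) (v : 'rV[R]_3) : 'rV[R]_3 :=
  \sum_(k < 4) (dot v (vk k)) ^+ d.-1 *: vk k.

Definition eigenpair (d : nat) (v : 'rV[R]_3) (mu : R) : Prop :=
  v != 0 /\ Tapply d v = mu *: v.

Definition g (d : nat) (s : R) : R := (4 * s - 1) ^+ d.-1 - (-1) ^+ d.-1.

Definition is_sstar (d : nat) (s : R) : Prop :=
  1 / 3 <= s < 1 / 2 /\
  (forall x y, 0 < x -> x < y -> y <= s -> g d y / y < g d x / x) /\
  (forall x y, s <= x -> x < y -> g d x / x < g d y / y).

Definition sumv (K : {set 'I_4}) : 'rV[R]_3 := \sum_(k in K) vk k.

Definition vK (K : {set 'I_4}) : 'rV[R]_3 :=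
  (Num.sqrt (#|K|%:R * (4 - #|K|%:R) / 3))^-1 *: sumv K.

Definition qK (K1 K2 : {set 'I_4}) (a b : R) : R :=
  4 * a ^+ 2 * #|K1|%:R + 4 * b ^+ 2 * #|K2|%:R - 1.

Definition vK2 (K1 K2 : {set 'I_4}) (a b : R) : 'rV[R]_3 :=
  (Num.sqrt (qK K1 K2 a b / 3))^-1 *: (a *: sumv K1 + b *: sumv K2).

(* 3^{d/2} (|K|(4-|K|))^{d/2-1}, written with square roots *)
Definition denK (d : nat) (K : {set 'I_4}) : R :=
  Num.sqrt 3 ^+ d * Num.sqrt (#|K|%:R * (4 - #|K|%:R)) ^+ (d - 2).

Definition mu_odd (d : nat) (K : {set 'I_4}) : R :=
  ((4 - #|K|%:R) ^+ d.-1 - #|K|%:R ^+ d.-1) / denK d K.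

Definition mu_even (d : nat) (K : {set 'I_4}) : R :=
  ((4 - #|K|%:R) ^+ d.-1 + #|K|%:R ^+ d.-1) / denK d K.

Definition mu_even2 (d : nat) (K1 K2 : {set 'I_4}) (a b : R) : R :=
  (#|K1|%:R * (4 * a - 1) ^+ d + #|K2|%:R * (4 * b - 1) ^+ d
     + 4 - #|K1|%:R - #|K2|%:R)
  / (Num.sqrt 3 ^+ d * Num.sqrt (qK K1 K2 a b) ^+ d).

Definition wzero (j : 'I_3) : 'rV[R]_3 :=
  (Num.sqrt (4 / 3))^-1 *: (vk 0 + vk (lift ord0 j)).

Definition condK (K : {set 'I_4}) : Prop := (0 < #|K| <= 3)%N.

Definition condK2 (d : nat) (sstar : R) (K1 K2 : {set 'I_4}) (a b : R) : Prop :=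
  (0 < #|K1|)%N /\ (0 < #|K2|)%N /\ [disjoint K1 & K2] /\ (#|K1 :|: K2| <= 3)%N /\
  (0 < a /\ a <= sstar /\ sstar < b /\ b <= 1) /\
  #|K1|%:R * a + #|K2|%:R * b = 1 /\
  g d a / a = g d b / b.

End SimplexFrame.

(* Write x_k = <v, v_k>.  The v_k form a tight frame (sum_k x_k v_k = 4/3 v) whose
   only linear relation is sum_k v_k = 0, so T.v^(d-1) = mu v says exactly that all
   x_k lie on one level set of p(t) = t^(d-1) - (3 mu / 4) t.  By Rolle's theorem such
   a level set has at most two points when d - 1 is even and at most three when d - 1
   is odd.  Together with sum_k x_k = 0 and sum_k x_k^2 = 4/3, two coordinate values
   force v = v_K, and three values, the smallest one negative, force the vector with
   parameters a, b; there g(a)/a = g(b)/b is the level-set condition in disguise.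
   Conversely these vectors are eigenvectors, and the eigenvalue of a unit eigenvector
   is mu = sum_k x_k^d, positive for even d.  For mu = 0 and odd d all |x_k| agree, so
   two of them equal sqrt 3 / 3 and two equal - sqrt 3 / 3. *)

From HB Require Import structures.
From mathcomp Require Import all_boot all_order all_algebra.
From mathcomp Require Import reals polyrcf.
From mathcomp Require Import ring lra.
Import Order.TTheory GRing.Theory Num.Theory.
Local Open Scope ring_scope.

Set Implicit Arguments.
Unset Strict Implicit.
Unset Printing Implicit Defensive.

Lemma exprN_odd (R : pzRingType) (m : nat) (x : R) : odd m -> (- x) ^+ m = - x ^+ m.
Proof. by move=> om; rewrite exprNn -signr_odd om expr1 mulN1r. Qed.

Lemma exprN_even (R : pzRingType) (m : nat) (x : R) : ~~ odd m -> (- x) ^+ m = x ^+ m.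
Proof. by move=> em; rewrite exprNn -signr_odd (negbTE em) expr0 mul1r. Qed.

Lemma ltrXn2_odd (R : realDomainType) (m : nat) (x y : R) :
  odd m -> x < y -> x ^+ m < y ^+ m.
Proof.
move=> om lt_xy; have m0 : m != 0%N by case: m om.
have [x0|x0] := leP 0 x; first by rewrite ltrXn2r.
have [y0|y0] := leP 0 y.
  by apply: (lt_le_trans (y := 0)); rewrite ?exprn_odd_lt0 ?exprn_odd_ge0.
have ny : 0 <= - y by rewrite oppr_ge0 ltW.
by have := ltrXn2r m ny (_ : - y < - x); rewrite ltrN2 lt_xy m0 !exprN_odd // ltrN2 => ->.
Qed.

Section PowerLevelSets.
Variable R : rcfType.
Implicit Types (m : nat) (lam p q s t : R).

Definition powlin m lam : {poly R} := 'X^m - lam *: 'X.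

Lemma powlinE m lam t : (powlin m lam).[t] = t ^+ m - lam * t.
Proof. by rewrite /powlin !hornerE. Qed.

Lemma powlin_derivE m lam t : (powlin m lam)^`().[t] = t ^+ m.-1 *+ m - lam.
Proof.
rewrite /powlin derivB derivXn derivZ derivX hornerD hornerN hornerMn hornerXn.
by rewrite hornerZ hornerC mulr1.
Qed.

Lemma powlin_deriv2E m lam t : (powlin m lam)^`()^`().[t] = t ^+ m.-2 *+ m.-1 *+ m.
Proof.
rewrite /powlin !derivB derivXn derivZ derivX derivMn derivXn -polyC1 derivZ derivC.
by rewrite scaler0 subr0 hornerMn hornerMn hornerXn.
Qed.

Lemma rolle_open (P : {poly R}) p q :
  p < q -> P.[p] = P.[q] -> exists2 c, p < c < q & P^`().[c] = 0.
Proof. by move=> pq /(poly_rolle pq) [c]; rewrite in_itv /=; exists c. Qed.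

(* For even [m], the derivative [m t^(m-1) - lam] is strictly increasing. *)
Lemma powlin_even_no_level3 m lam p q s : ~~ odd m -> (0 < m)%N -> p < q -> q < s ->
  (powlin m lam).[p] = (powlin m lam).[q] -> (powlin m lam).[q] = (powlin m lam).[s] ->
  False.
Proof.
move=> em m0 pq qs; have om : odd m.-1 by case: m em m0 => //= m; rewrite negbK.
move=> /(rolle_open pq) [c1 /andP [_ c1q] r1] /(rolle_open qs) [c2 /andP [qc2 _] r2].
move: r1 r2; rewrite !powlin_derivE => /eqP; rewrite subr_eq0 => /eqP r1.
move=> /eqP; rewrite subr_eq0 => /eqP r2.
by have := ltrXn2_odd om (lt_trans c1q qc2); rewrite -(ltr_pMn2r m0) r1 r2 ltxx.
Qed.

(* For odd [m >= 3], the second derivative [m (m-1) t^(m-2)] vanishes only at [0]. *)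
Lemma powlin_odd_no_level4 m lam p q s t : odd m -> (3 <= m)%N ->
  p < q -> q < s -> s < t ->
  (powlin m lam).[p] = (powlin m lam).[q] -> (powlin m lam).[q] = (powlin m lam).[s] ->
  (powlin m lam).[s] = (powlin m lam).[t] -> False.
Proof.
move=> om m3 pq qs st e1 e2 e3.
have root_deriv2 z : (powlin m lam)^`()^`().[z] == 0 -> z = 0.
  rewrite powlin_deriv2E !mulrn_eq0 expf_eq0.
  by case: m om m3 {e1 e2 e3} => [|[|[|m]]] //= _ _ /eqP.
have [c1 /andP [_ c1q] r1] := rolle_open pq e1.
have [c2 /andP [qc2 c2s] r2] := rolle_open qs e2.
have [c3 /andP [sc3 _] r3] := rolle_open st e3.
have [z1 /andP [_ z1c2] /eqP r4] := rolle_open (lt_trans c1q qc2) (etrans r1 (esym r2)).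
have [z2 /andP [c2z2 _] /eqP r5] := rolle_open (lt_trans c2s sc3) (etrans r2 (esym r3)).
by have := lt_trans z1c2 c2z2; rewrite (root_deriv2 _ r4) (root_deriv2 _ r5) ltxx.
Qed.

End PowerLevelSets.

Section SimplexFrame.
Variable R : realType.
Implicit Types (v w : 'rV[R]_3) (K : {set 'I_4}) (a b c mu lam : R).
Local Notation sqrt3 := (Num.sqrt (3 : R)).

Lemma sqrt3_gt0 : 0 < sqrt3. Proof. by rewrite sqrtr_gt0. Qed.
Lemma sqr_sqrt3 : sqrt3 ^+ 2 = 3. Proof. by rewrite sqr_sqrtr. Qed.
Lemma sqrt3_neq0 : sqrt3 != 0. Proof. by rewrite gt_eqF // sqrt3_gt0. Qed.

Lemma sqrt_4div3 : Num.sqrt (4 / 3 : R) = 2 / sqrt3.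
Proof.
have -> : (4 / 3 : R) = (2 / sqrt3) ^+ 2 by rewrite expr_div_n sqr_sqrt3; field.
by rewrite sqrtr_sqr ger0_norm // divr_ge0 // ltW // sqrt3_gt0.
Qed.

Lemma mul_sqrt_div3 x : 0 <= x -> 3 * Num.sqrt (x / 3) = sqrt3 * Num.sqrt x :> R.
Proof.
move=> x0; rewrite sqrtrM // sqrtrV // -{1}sqr_sqrt3.
by field; exact: sqrt3_neq0.
Qed.

Definition o0 : 'I_4 := @Ordinal 4 0 isT.
Definition o1 : 'I_4 := @Ordinal 4 1 isT.
Definition o2 : 'I_4 := @Ordinal 4 2 isT.
Definition o3 : 'I_4 := @Ordinal 4 3 isT.

Lemma ord4P (k : 'I_4) : [\/ k = o0, k = o1, k = o2 | k = o3].
Proof.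
by case: k => [[|[|[|[|n]]]] h] //; [constructor 1|constructor 2|constructor 3|constructor 4];
  apply/val_inj.
Qed.

Lemma ord3P (i : 'I_3) : [\/ i = 0, i = 1 | i = 2].
Proof.
by case: i => [[|[|[|n]]] h] //; [constructor 1|constructor 2|constructor 3]; apply/val_inj.
Qed.

Lemma big_ord4 (F : 'I_4 -> R) : \sum_(k < 4) F k = F o0 + F o1 + F o2 + F o3.
Proof.
rewrite !big_ord_recl big_ord0 addr0 !addrA.
by congr (_ + _ + _ + _); congr F; apply/val_inj.
Qed.

Lemma big_ord3 (F : 'I_3 -> R) : \sum_(i < 3) F i = F 0 + F 1 + F 2.
Proof.
rewrite !big_ord_recl big_ord0 addr0 !addrA.
by congr (_ + _ + _); congr F; apply/val_inj.
Qed.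

Lemma dotC v w : dot v w = dot w v.
Proof. by apply: eq_bigr => i _; rewrite mulrC. Qed.

Lemma dotZl a v w : dot (a *: v) w = a * dot v w.
Proof. by rewrite /dot mulr_sumr; apply: eq_bigr => i _; rewrite mxE mulrA. Qed.

Lemma dotZr a v w : dot v (a *: w) = a * dot v w.
Proof. by rewrite dotC dotZl dotC. Qed.

Lemma dotDl v v' w : dot (v + v') w = dot v w + dot v' w.
Proof. by rewrite /dot -big_split; apply: eq_bigr => i _; rewrite mxE mulrDl. Qed.

Lemma dotNl v w : dot (- v) w = - dot v w.
Proof. by rewrite -scaleN1r dotZl mulN1r. Qed.

Lemma dotDr v w w' : dot v (w + w') = dot v w + dot v w'.
Proof. by rewrite dotC dotDl !(dotC v). Qed.

Lemma dot0l w : dot 0 w = 0.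
Proof. by rewrite /dot big1 // => i _; rewrite mxE mul0r. Qed.

Lemma dot_suml (F : 'I_4 -> 'rV[R]_3) w :
  dot (\sum_(k < 4) F k) w = \sum_(k < 4) dot (F k) w.
Proof.
rewrite /dot; under eq_bigr do rewrite summxE mulr_suml.
by rewrite exchange_big.
Qed.

Lemma dotE v w : dot v w = v 0 0 * w 0 0 + v 0 1 * w 0 1 + v 0 2 * w 0 2.
Proof. exact: big_ord3. Qed.

(* [uk k = sqrt 3 *: vk k] has rational entries, so identities about it are
   checked entrywise by linear arithmetic. *)
Definition uk (k : 'I_4) : 'rV[R]_3 :=
  \row_(i < 3) (if (k < 3)%N then 2 * (i == k :> nat)%:R - 1 / 3 else -1).

Lemma vk_uk k : vk k = sqrt3^-1 *: uk k.
Proof.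
apply/rowP => i; rewrite /vk /uk !mxE.
case: ifP => hk; rewrite !mxE.
- rewrite sqrt_4div3 /= -(inj_eq val_inj) /= inordK //.
  by field; exact: sqrt3_neq0.
- by rewrite mulr1 mulrN1.
Qed.

Lemma dot_uk j k : dot (uk j) (uk k) = if j == k then 3 else -1.
Proof.
by case: (ord4P j) => ->; case: (ord4P k) => ->; rewrite dotE !mxE /=; lra.
Qed.

Lemma dot_vk j k : dot (vk j) (vk k) = if j == k then 1 else - 1 / 3 :> R.
Proof.
rewrite !vk_uk dotZl dotZr dot_uk mulrA -invfM -expr2 sqr_sqrt3.
by case: ifP => _; lra.
Qed.

Lemma sum_vk : \sum_(k < 4) vk k = 0 :> 'rV[R]_3.
Proof.
under eq_bigr do rewrite vk_uk.
rewrite -scaler_sumr (_ : \sum_(k < 4) uk k = 0) ?scaler0 //.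
by apply/rowP => i; rewrite summxE big_ord4 !mxE; case: (ord3P i) => -> /=; lra.
Qed.

Definition fcoord v (k : 'I_4) : R := dot v (vk k).

Lemma fcoordZ a v k : fcoord (a *: v) k = a * fcoord v k.
Proof. exact: dotZl. Qed.

Lemma fcoordD v w k : fcoord (v + w) k = fcoord v k + fcoord w k.
Proof. exact: dotDl. Qed.

Lemma fcoordN v k : fcoord (- v) k = - fcoord v k.
Proof. exact: dotNl. Qed.

Lemma sum_fcoord_vk v : \sum_(k < 4) fcoord v k *: vk k = (4 / 3) *: v.
Proof.
have e k : fcoord v k *: vk k = 3^-1 *: (dot v (uk k) *: uk k).
  by rewrite /fcoord vk_uk dotZr !scalerA mulrAC -invfM -expr2 sqr_sqrt3.
under eq_bigr do rewrite e.
rewrite -scaler_sumr.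
apply/rowP => i; rewrite !mxE summxE big_ord4 !mxE !dotE !mxE.
by case: (ord3P i) => -> /=; lra.
Qed.

Lemma sum_fcoord v : \sum_(k < 4) fcoord v k = 0.
Proof.
transitivity (dot (\sum_(k < 4) vk k) v); last by rewrite sum_vk dot0l.
by rewrite dot_suml; apply: eq_bigr => k _; rewrite dotC.
Qed.

Lemma fcoord_inj v w : (forall k, fcoord v k = fcoord w k) -> v = w.
Proof.
move=> e; apply: (@scalerI _ _ (4 / 3)); first by apply/eqP; lra.
by rewrite -!sum_fcoord_vk; under eq_bigr do rewrite e.
Qed.

Lemma dot_fcoord v : dot v v = 3 / 4 * \sum_(k < 4) fcoord v k ^+ 2.
Proof.
have {1}-> : v = (3 / 4) *: ((4 / 3) *: v).
  by rewrite scalerA (_ : 3 / 4 * (4 / 3) = 1 :> R) ?scale1r //; lra.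
rewrite -sum_fcoord_vk dotZl dot_suml; congr (_ * _).
by apply: eq_bigr => k _; rewrite dotZl expr2 dotC.
Qed.

Lemma fcoord_comb (y : 'I_4 -> R) k :
  fcoord (\sum_(j < 4) y j *: vk j) k = 4 / 3 * y k - 1 / 3 * \sum_(j < 4) y j.
Proof.
rewrite /fcoord dot_suml; under eq_bigr do rewrite dotZl dot_vk.
by rewrite !big_ord4; case: (ord4P k) => -> /=; lra.
Qed.

Lemma comb_vk_eq0 (y : 'I_4 -> R) :
  \sum_(j < 4) y j *: vk j = 0 -> forall j k, y j = y k.
Proof.
move=> e j k; have c l : 4 / 3 * y l - 1 / 3 * \sum_(i < 4) y i = 0.
  by rewrite -fcoord_comb e /fcoord dot0l.
by have := c j; have := c k; lra.
Qed.

Lemma Tapply_level d v mu : Tapply d v = mu *: v <->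
  forall j k, (powlin d.-1 (3 / 4 * mu)).[fcoord v j] =
              (powlin d.-1 (3 / 4 * mu)).[fcoord v k].
Proof.
set P := powlin _ _.
have E : \sum_(k < 4) P.[fcoord v k] *: vk k = Tapply d v - mu *: v.
  under eq_bigr do rewrite powlinE scalerBl -scalerA.
  rewrite sumrB -scaler_sumr sum_fcoord_vk scalerA; congr (_ - _ *: _).
  by field.
split=> [e | e]; first by apply: comb_vk_eq0; rewrite E e subrr.
apply/eqP; rewrite -subr_eq0 -E.
under eq_bigr do rewrite (e _ o0).
by rewrite -scaler_sumr sum_vk scaler0.
Qed.

Lemma Tapply_affine d v lam e :
  (forall k, fcoord v k ^+ d.-1 = lam * fcoord v k + e) ->
  Tapply d v = (4 / 3 * lam) *: v.
Proof.
move=> h; apply/Tapply_level => j k.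
rewrite (_ : 3 / 4 * (4 / 3 * lam) = lam); last by field.
by rewrite !powlinE !h; ring.
Qed.

Lemma two_valued_eigen d v A B :
  (forall k, fcoord v k = A \/ fcoord v k = B) -> exists mu, Tapply d v = mu *: v.
Proof.
move=> hv; have [eAB | nAB] := eqVneq A B.
  rewrite {}eAB in hv; exists (4 / 3 * 0); apply: (@Tapply_affine _ _ _ (B ^+ d.-1)) => k.
  by rewrite mul0r add0r; case: (hv k) => ->.
pose lam := (A ^+ d.-1 - B ^+ d.-1) / (A - B).
exists (4 / 3 * lam); apply: (@Tapply_affine _ _ _ (A ^+ d.-1 - lam * A)) => k.
have AB0 : A - B != 0 by rewrite subr_eq0.
by case: (hv k) => ->; rewrite /lam; field.
Qed.

(* [mu = <T . v^(d-1), v>] *)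
Lemma eigenvalue_unit d v mu : (0 < d)%N -> unitv v -> Tapply d v = mu *: v ->
  mu = \sum_(k < 4) fcoord v k ^+ d.
Proof.
move=> d0 hu /(congr1 (dot^~ v)); rewrite dotZl (hu : dot v v = 1) mulr1.
rewrite /Tapply dot_suml => <-; apply: eq_bigr => k _.
by rewrite dotZl [dot (vk k) v]dotC -exprSr prednK.
Qed.

Lemma sum_fcoord_pow_gt0 d v : ~~ odd d -> v != 0 -> 0 < \sum_(k < 4) fcoord v k ^+ d.
Proof.
move=> ed v0; case: (pickP (fun k => fcoord v k != 0)) => [k xk | none]; last first.
  case/eqP: v0; apply: fcoord_inj => k.
  by have /negbFE/eqP -> := none k; rewrite /fcoord dot0l.
apply: (@lt_le_trans _ _ (fcoord v k ^+ d)); first by rewrite exprn_even_gt0 // xk orbT.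
rewrite (bigD1 k) //= lerDl sumr_ge0 // => j _; exact: exprn_even_ge0.
Qed.

Lemma unitv_neq0 v : unitv v -> v != 0.
Proof.
by move=> hu; apply/eqP => v0; move: hu; rewrite /unitv v0 dot0l => /eqP; rewrite eq_sym oner_eq0.
Qed.

Lemma unitv_normalize w : 0 < dot w w -> unitv ((Num.sqrt (dot w w))^-1 *: w).
Proof.
move=> w0; rewrite /unitv dotZl dotZr mulrA -invfM -expr2 sqr_sqrtr ?ltW //.
by rewrite mulVf // gt_eqF.
Qed.

Lemma unitv_scale v w c : unitv v -> 0 < c -> v = c *: w ->
  v = (Num.sqrt (dot w w))^-1 *: w.
Proof.
move=> hu c0 e; have c0' : c != 0 by rewrite gt_eqF.
have ww : dot w w = c^-1 ^+ 2.
  move: hu; rewrite /unitv e dotZl dotZr mulrA => h.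
  have -> : dot w w = (c * c)^-1 * (c * c * dot w w) by rewrite mulKf // mulf_neq0.
  by rewrite h mulr1 exprVn expr2.
by rewrite ww sqrtr_sqr ger0_norm ?invr_ge0 ?ltW // invrK.
Qed.

Definition ind K (k : 'I_4) : R := if k \in K then 1 else 0.

Lemma sum_ind K : \sum_(k < 4) ind K k = #|K|%:R.
Proof. by rewrite /ind -big_mkcond /= sumr_const -[RHS]mulr1 mulr_natl. Qed.

Lemma sum_ind_fun K (F : R -> R) :
  \sum_(k < 4) F (ind K k) = #|K|%:R * F 1 + (4 - #|K|%:R) * F 0.
Proof.
transitivity (\sum_(k < 4) (ind K k * (F 1 - F 0) + F 0)).
  by apply: eq_bigr => k _; rewrite /ind; case: (k \in K); ring.
by rewrite big_split /= -mulr_suml sum_ind sumr_const card_ord -mulr_natl; ring.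
Qed.

Lemma sum_ind2_fun K1 K2 a b (F : R -> R) : [disjoint K1 & K2] ->
  \sum_(k < 4) F (a * ind K1 k + b * ind K2 k) =
  #|K1|%:R * F a + #|K2|%:R * F b + (4 - #|K1|%:R - #|K2|%:R) * F 0.
Proof.
move=> dis.
transitivity (\sum_(k < 4) (ind K1 k * (F a - F 0) + ind K2 k * (F b - F 0) + F 0)).
  apply: eq_bigr => k _; rewrite /ind.
  case: ifP => k1; case: ifP => k2; last 3 first.
  - by rewrite mulr1 mulr0 addr0; ring.
  - by rewrite mulr0 mulr1 add0r; ring.
  - by rewrite !mulr0 addr0; ring.
  by move: (disjointFr dis k1); rewrite k2.
rewrite !big_split /= -!mulr_suml !sum_ind sumr_const card_ord -mulr_natl; ring.
Qed.

Lemma card_le4 K : (#|K| <= 4)%N.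
Proof. by have := max_card (mem K); rewrite card_ord. Qed.

Lemma condK_card K : condK K -> (0 < #|K|%:R :> R) /\ (#|K|%:R < 4 :> R).
Proof. by case/andP => n0 n3; rewrite ltr0n n0 ltr_nat. Qed.

Lemma sumv_ind K : sumv K = \sum_(k < 4) ind K k *: vk k.
Proof.
rewrite /sumv big_mkcond /=; apply: eq_bigr => k _.
by rewrite /ind; case: ifP => _; rewrite ?scale1r ?scale0r.
Qed.

Lemma fcoord_sumv K k : fcoord (sumv K) k = (4 * ind K k - #|K|%:R) / 3.
Proof. by rewrite sumv_ind fcoord_comb sum_ind; field. Qed.

Lemma dot_sumv K : dot (sumv K) (sumv K) = #|K|%:R * (4 - #|K|%:R) / 3 :> R.
Proof.
rewrite dot_fcoord; under eq_bigr do rewrite fcoord_sumv.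
by rewrite (sum_ind_fun K (fun t => ((4 * t - #|K|%:R) / 3) ^+ 2)); field.
Qed.

Lemma unitv_vK K : condK K -> unitv (vK (R:=R) K).
Proof.
move=> /condK_card [n0 n4]; rewrite /vK -dot_sumv.
by apply: unitv_normalize; rewrite dot_sumv divr_gt0 // mulr_gt0 // subr_gt0.
Qed.

Lemma fcoord_vK K k : condK K -> fcoord (vK K) k =
  (4 * ind K k - #|K|%:R) / (sqrt3 * Num.sqrt (#|K|%:R * (4 - #|K|%:R))).
Proof.
move=> /condK_card [n0 n4]; have nn : 0 < #|K|%:R * (4 - #|K|%:R) :> R.
  by rewrite mulr_gt0 // subr_gt0.
rewrite /vK fcoordZ fcoord_sumv -mul_sqrt_div3 ?ltW //.
have : Num.sqrt (#|K|%:R * (4 - #|K|%:R) / 3 : R) != 0.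
  by rewrite gt_eqF // sqrtr_gt0 divr_gt0.
by move=> s0; field.
Qed.

Definition sumv2 K1 K2 a b : 'rV[R]_3 := a *: sumv K1 + b *: sumv K2.

Lemma fcoord_sumv2 K1 K2 a b k : #|K1|%:R * a + #|K2|%:R * b = 1 ->
  fcoord (sumv2 K1 K2 a b) k = (4 * (a * ind K1 k + b * ind K2 k) - 1) / 3.
Proof. by move=> e; rewrite fcoordD !fcoordZ !fcoord_sumv; lra. Qed.

Lemma dot_sumv2 K1 K2 a b : [disjoint K1 & K2] -> #|K1|%:R * a + #|K2|%:R * b = 1 ->
  dot (sumv2 K1 K2 a b) (sumv2 K1 K2 a b) = qK K1 K2 a b / 3.
Proof.
move=> dis e; rewrite dot_fcoord; under eq_bigr do rewrite fcoord_sumv2 //.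
by rewrite (sum_ind2_fun _ _ (fun t => ((4 * t - 1) / 3) ^+ 2) dis) /qK; lra.
Qed.

Lemma disjoint_card_le3 K1 K2 : [disjoint K1 & K2] -> (#|K1 :|: K2| <= 3)%N ->
  #|K1|%:R + #|K2|%:R <= 3 :> R.
Proof. by move=> dis; rewrite cardsU (disjoint_setI0 dis) cards0 subn0 -natrD ler_nat. Qed.

(* Cauchy-Schwarz: [(n1 + n2) (n1 a^2 + n2 b^2) >= (n1 a + n2 b)^2 = 1]. *)
Lemma qK_gt0 K1 K2 a b : #|K1|%:R + #|K2|%:R <= 3 :> R ->
  #|K1|%:R * a + #|K2|%:R * b = 1 -> 0 < qK K1 K2 a b.
Proof.
rewrite /qK; set n1 : R := #|K1|%:R; set n2 : R := #|K2|%:R => n3 e.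
have n10 : 0 <= n1 by []; have n20 : 0 <= n2 by [].
have cs : 1 <= (n1 + n2) * (n1 * a ^+ 2 + n2 * b ^+ 2).
  have -> : (n1 + n2) * (n1 * a ^+ 2 + n2 * b ^+ 2) =
            (n1 * a + n2 * b) ^+ 2 + n1 * n2 * (a - b) ^+ 2 by ring.
  by rewrite e expr1n lerDl; apply: mulr_ge0; [exact: mulr_ge0 | exact: sqr_ge0].
have : 0 <= (3 - (n1 + n2)) * (n1 * a ^+ 2 + n2 * b ^+ 2).
  by apply: mulr_ge0; [lra | apply: addr_ge0; apply: mulr_ge0 => //; exact: sqr_ge0].
lra.
Qed.

Lemma condK2_parts d s K1 K2 a b : condK2 d s K1 K2 a b ->
  [/\ [disjoint K1 & K2], #|K1|%:R + #|K2|%:R <= 3 :> R, 0 < a, a < b &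
      #|K1|%:R * a + #|K2|%:R * b = 1].
Proof.
case=> _ [_ [dis [cu [[a0 [as_ [sb _]]] [e _]]]]].
by split => //; [exact: disjoint_card_le3 | exact: le_lt_trans sb].
Qed.

Lemma unitv_vK2 d s K1 K2 a b : condK2 d s K1 K2 a b -> unitv (vK2 K1 K2 a b).
Proof.
case/condK2_parts => dis n3 _ _ e.
rewrite /vK2 -(dot_sumv2 dis e); apply: unitv_normalize.
by rewrite dot_sumv2 // divr_gt0 // qK_gt0.
Qed.

Lemma fcoord_vK2 d s K1 K2 a b k : condK2 d s K1 K2 a b ->
  fcoord (vK2 K1 K2 a b) k =
  (4 * (a * ind K1 k + b * ind K2 k) - 1) / (sqrt3 * Num.sqrt (qK K1 K2 a b)).
Proof.
case/condK2_parts => dis n3 _ _ e; have q0 := qK_gt0 n3 e.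
rewrite /vK2 fcoordZ -/(sumv2 K1 K2 a b) fcoord_sumv2 // -mul_sqrt_div3 ?ltW //.
have : Num.sqrt (qK K1 K2 a b / 3) != 0 by rewrite gt_eqF // sqrtr_gt0 divr_gt0.
by move=> s0; field.
Qed.

Lemma Tapply_vK d K : (0 < d)%N -> condK K ->
  Tapply d (vK K) = (\sum_(k < 4) fcoord (vK K) k ^+ d) *: vK K.
Proof.
move=> d0 hK; pose W := sqrt3 * Num.sqrt (#|K|%:R * (4 - #|K|%:R)).
have [mu e] : exists mu, Tapply d (vK K) = mu *: vK K.
  apply: (@two_valued_eigen _ _ ((4 * 1 - #|K|%:R) / W) ((4 * 0 - #|K|%:R) / W)) => k.
  by rewrite fcoord_vK // /ind; case: (k \in K); [left | right].
by rewrite -(eigenvalue_unit d0 (unitv_vK hK) e).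
Qed.

Lemma sum_fcoord_vK_pow d K : (2 <= d)%N -> condK K ->
  \sum_(k < 4) fcoord (vK K) k ^+ d =
  ((4 - #|K|%:R) ^+ d.-1 - (- #|K|%:R) ^+ d.-1) / denK d K.
Proof.
case: d => [|[|d]] // _ hK; have [n0 n4] := condK_card hK.
under eq_bigr do rewrite fcoord_vK //.
rewrite (sum_ind_fun K (fun t => ((4 * t - #|K|%:R) / _) ^+ d.+2)) /denK subSS subSS subn0.
set n : R := #|K|%:R in n0 n4 *.
have nn : 0 < n * (4 - n) by rewrite mulr_gt0 // subr_gt0.
have s0 : Num.sqrt (n * (4 - n)) != 0 by rewrite gt_eqF // sqrtr_gt0.
have s2 : Num.sqrt (n * (4 - n)) ^+ 2 = n * (4 - n) by rewrite sqr_sqrtr // ltW.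
have sd : Num.sqrt (n * (4 - n)) ^+ d.+2 = n * (4 - n) * Num.sqrt (n * (4 - n)) ^+ d.
  by rewrite !exprSr -mulrA -expr2 s2 mulrC.
rewrite mulr1 mulr0 sub0r !expr_div_n !exprMn sd !exprS.
have n0' : n != 0 by rewrite gt_eqF.
have n4' : 4 - n != 0 by rewrite gt_eqF // subr_gt0.
field; rewrite !expf_neq0 // sqrt3_neq0 //=.
by apply/andP; split; [exact: n4' | exact: n0'].
Qed.

Lemma eigenpair_vK_odd d K : odd d -> (2 <= d)%N -> condK K ->
  eigenpair d (vK K) (mu_odd (R:=R) d K).
Proof.
move=> od d2 hK; split; first exact/unitv_neq0/unitv_vK.
have em : ~~ odd d.-1 by case: d od {d2}.
by rewrite Tapply_vK ?sum_fcoord_vK_pow ?exprN_even //; case: d d2 {od em}.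
Qed.

Lemma eigenpair_vK_even d K : ~~ odd d -> (2 <= d)%N -> condK K ->
  eigenpair d (vK K) (mu_even (R:=R) d K) /\ 0 < mu_even (R:=R) d K.
Proof.
move=> ed d2 hK; have d0 : (0 < d)%N by case: d d2 {ed}.
have om : odd d.-1 by case: d ed d2 {d0} => //= d; rewrite negbK.
have -> : mu_even d K = \sum_(k < 4) fcoord (vK K) k ^+ d.
  by rewrite sum_fcoord_vK_pow // exprN_odd // opprK.
split; last exact/sum_fcoord_pow_gt0/unitv_neq0/unitv_vK.
by split; [exact/unitv_neq0/unitv_vK | exact: Tapply_vK].
Qed.

Lemma g_affine d (t : R) : odd d.-1 -> t != 0 -> (4 * t - 1) ^+ d.-1 = g d t / t * t - 1.
Proof. by move=> om t0; rewrite divfK // /g exprN_odd // expr1n; ring. Qed.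

(* With [kap = g(a)/a = g(b)/b], each [x = 4 t - 1], [t in {0, a, b}], satisfies
   [x^(d-1) = kap/4 * x + (kap/4 - 1)]. *)
Lemma Tapply_vK2 d s K1 K2 a b : ~~ odd d -> (2 <= d)%N -> condK2 d s K1 K2 a b ->
  Tapply d (vK2 K1 K2 a b) =
  (\sum_(k < 4) fcoord (vK2 K1 K2 a b) k ^+ d) *: vK2 K1 K2 a b.
Proof.
case: d => [|[|m]] // ed _ hc; have om : odd m.+1 by move: ed => /=; rewrite negbK.
suff [mu e] : exists mu, Tapply m.+2 (vK2 K1 K2 a b) = mu *: vK2 K1 K2 a b.
  by rewrite -(eigenvalue_unit _ (unitv_vK2 hc) e).
have [dis n3 a0 ab e] := condK2_parts hc; have [_ [_ [_ [_ [_ [_ gg]]]]]] := hc.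
have a0' : a != 0 by rewrite gt_eqF.
have b0' : b != 0 by rewrite gt_eqF // (lt_trans a0 ab).
set kap := g m.+2 a / a.
have hx k : (4 * (a * ind K1 k + b * ind K2 k) - 1) ^+ m.+1 =
            kap / 4 * (4 * (a * ind K1 k + b * ind K2 k) - 1) + (kap / 4 - 1).
  rewrite /ind; case: ifP => k1; case: ifP => k2.
  - by move: (disjointFr dis k1); rewrite k2.
  - by rewrite mulr1 mulr0 addr0 (@g_affine m.+2 a om a0') -/kap; field.
  - by rewrite mulr0 mulr1 add0r (@g_affine m.+2 b om b0') -gg -/kap; field.
  - by rewrite !mulr0 addr0 mulr0 sub0r exprN_odd // expr1n; field.
pose W := sqrt3 * Num.sqrt (qK K1 K2 a b).
have W0 : W != 0 by rewrite mulf_neq0 ?sqrt3_neq0 // gt_eqF // sqrtr_gt0 qK_gt0.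
exists (4 / 3 * (kap / (4 * W ^+ m))).
apply: (@Tapply_affine _ _ _ ((kap / 4 - 1) / W ^+ m.+1)) => k /=.
rewrite (fcoord_vK2 _ hc) -/W expr_div_n hx exprS.
by field; rewrite W0 expf_neq0.
Qed.

Lemma sum_fcoord_vK2_pow d s K1 K2 a b : ~~ odd d -> condK2 d s K1 K2 a b ->
  \sum_(k < 4) fcoord (vK2 K1 K2 a b) k ^+ d = mu_even2 d K1 K2 a b.
Proof.
move=> ed hc; have [dis n3 _ _ e] := condK2_parts hc.
under eq_bigr do rewrite (fcoord_vK2 _ hc).
rewrite (sum_ind2_fun _ _ (fun t => ((4 * t - 1) / _) ^+ d) dis) /mu_even2.
rewrite !expr_div_n exprMn mulr0 sub0r exprN_even // expr1n.
have q0 : Num.sqrt (qK K1 K2 a b) != 0 by rewrite gt_eqF // sqrtr_gt0 qK_gt0.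
by field; rewrite !expf_neq0 ?sqrt3_neq0.
Qed.

Lemma eigenpair_vK2 d s K1 K2 a b : ~~ odd d -> (2 <= d)%N -> condK2 d s K1 K2 a b ->
  eigenpair d (vK2 K1 K2 a b) (mu_even2 d K1 K2 a b) /\ 0 < mu_even2 d K1 K2 a b.
Proof.
move=> ed d2 hc; have v0 := unitv_neq0 (unitv_vK2 hc).
rewrite -(sum_fcoord_vK2_pow ed hc).
by split; [split; last exact: Tapply_vK2 ed d2 hc | exact: sum_fcoord_pow_gt0].
Qed.

Lemma fcoord_extrema v : unitv v -> exists km kM,
  [/\ forall k, fcoord v km <= fcoord v k, forall k, fcoord v k <= fcoord v kM
    & fcoord v km < fcoord v kM].
Proof.
move=> hu.
have [km _ hm] := @arg_minP _ _ _ o0 xpredT (fcoord v) isT.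
have [kM _ hM] := @arg_maxP _ _ _ o0 xpredT (fcoord v) isT.
have {}hm k : fcoord v km <= fcoord v k by exact: hm.
have {}hM k : fcoord v k <= fcoord v kM by exact: hM.
exists km, kM; split => //; rewrite ltNge; apply/negP => le_Mm.
have e k : fcoord v k = fcoord v km by apply/eqP; rewrite eq_le hm (le_trans (hM k)).
have := sum_fcoord v; have := dot_fcoord v; rewrite (hu : dot v v = 1) !big_ord4 !e.
move=> h1 h2; have z : fcoord v km = 0 by lra.
by move: h1; rewrite z expr0n /=; lra.
Qed.

Lemma two_valued_vK v A B : unitv v -> B < A ->
  (forall k, fcoord v k = A \/ fcoord v k = B) -> exists K, condK K /\ v = vK K.
Proof.
move=> hu BA hv; set K := [set k | fcoord v k == A].
have hx k : fcoord v k = B + ind K k * (A - B).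
  by rewrite /ind inE; case: (hv k) => ->; rewrite ?eqxx ?(lt_eqF BA); ring.
have hB : 4 * B + #|K|%:R * (A - B) = 0.
  rewrite -(sum_fcoord v); under eq_bigr do rewrite hx.
  by rewrite (sum_ind_fun K (fun t => B + t * (A - B))); ring.
have hvK : v = (3 / 4 * (A - B)) *: sumv K.
  by apply: fcoord_inj => k; rewrite fcoordZ fcoord_sumv hx; lra.
set c := 3 / 4 * (A - B) in hvK; have c0 : 0 < c by rewrite /c; lra.
(* [sumv K = 0] for [K] empty or full, which a unit vector excludes. *)
have nK : 0 < #|K|%:R * (4 - #|K|%:R) :> R.
  move: hu; rewrite /unitv {1 2}hvK dotZl dotZr dot_sumv => h.
  have c0' : c != 0 by rewrite gt_eqF.
  have -> : #|K|%:R * (4 - #|K|%:R) = 3 / (c * c) * (c * (c * (#|K|%:R * (4 - #|K|%:R) / 3))).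
    by field.
  by rewrite h mulr1 divr_gt0 // mulr_gt0.
exists K; split; last by rewrite (unitv_scale hu c0 hvK) dot_sumv.
move: nK (card_le4 K); rewrite /condK.
by case: #|K| => [|[|[|[|[|n]]]]] //=; rewrite ?mul0r ?ltxx // subrr mulr0 ltxx.
Qed.

(* Substituting [x = ga (1 - 4 t)] turns the level condition into a fixed value of [g(t)/t]. *)
Lemma level_g d lam ga x : odd d.-1 -> ga != 0 ->
  (powlin d.-1 lam).[x] = (powlin d.-1 lam).[ga] ->
  g d ((x - ga) / (-4 * ga)) = 4 * lam * ga / ga ^+ d.-1 * ((x - ga) / (-4 * ga)).
Proof.
move=> om ga0; rewrite !powlinE => e.
have gm : ga ^+ d.-1 != 0 by rewrite expf_neq0.
rewrite /g (_ : 4 * ((x - ga) / (-4 * ga)) - 1 = - (x / ga)); last by field.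
rewrite !exprN_odd // expr1n expr_div_n.
have -> : x ^+ d.-1 = ga ^+ d.-1 - lam * ga + lam * x by lra.
by field; rewrite ga0 gm.
Qed.

Lemma sstar_between d s a b : is_sstar d s -> 0 < a -> a < b ->
  g d a / a = g d b / b -> a <= s < b.
Proof.
case=> _ [dec inc] a0 ab gg; apply/andP; split.
- by rewrite leNgt; apply/negP => sa; have := inc a b (ltW sa) ab; rewrite gg ltxx.
- by rewrite ltNge; apply/negP => bs; have := dec a b a0 ab bs; rewrite gg ltxx.
Qed.

Lemma three_level_sets v ga be al kg kb ka : ga < be -> be < al ->
  (forall k, [\/ fcoord v k = ga, fcoord v k = be | fcoord v k = al]) ->
  fcoord v kg = ga -> fcoord v kb = be -> fcoord v ka = al ->
  exists K1 K2, [/\ [disjoint K1 & K2], (#|K1 :|: K2| <= 3)%N, kb \in K1, ka \in K2 &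
    forall k, fcoord v k = ga + ((be - ga) * ind K1 k + (al - ga) * ind K2 k)].
Proof.
move=> gb ba hv eg eb ea.
exists [set k | fcoord v k == be], [set k | fcoord v k == al].
split; rewrite ?inE ?eb ?ea //.
- rewrite disjoint_subset; apply/subsetP => k; rewrite !inE => /eqP ->.
  by rewrite lt_eqF.
- have : [set k | fcoord v k == be] :|: [set k | fcoord v k == al] \subset [set~ kg].
    apply/subsetP => k; rewrite !inE; apply: contraTN => /eqP ->.
    by rewrite eg (lt_eqF gb) (lt_eqF (lt_trans gb ba)).
  by move/subset_leq_card; rewrite cardsC1 card_ord.
- move=> k; rewrite /ind !inE; case: (hv k) => ->;
    rewrite ?eqxx ?(lt_eqF gb) ?(lt_eqF ba) ?(gt_eqF ba) ?(lt_eqF (lt_trans gb ba)); ring.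
Qed.

Lemma three_valued_vK2 d s v lam ga be al kg kb ka :
  odd d.-1 -> is_sstar d s -> unitv v ->
  (forall j k, (powlin d.-1 lam).[fcoord v j] = (powlin d.-1 lam).[fcoord v k]) ->
  ga < be -> be < al ->
  (forall k, [\/ fcoord v k = ga, fcoord v k = be | fcoord v k = al]) ->
  fcoord v kg = ga -> fcoord v kb = be -> fcoord v ka = al ->
  exists K1 K2 a b, condK2 d s K1 K2 a b /\ v = vK2 K1 K2 a b.
Proof.
move=> om hs hu hlev gb ba hv eg eb ea.
have [K1 [K2 [dis cu kb1 ka2 hx]]] := three_level_sets gb ba hv eg eb ea.
set n1 : R := #|K1|%:R; set n2 : R := #|K2|%:R.
have n1p : 1 <= n1 by rewrite ler1n; apply/card_gt0P; exists kb.
have n2p : 1 <= n2 by rewrite ler1n; apply/card_gt0P; exists ka.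
have hsum : 4 * ga + n1 * (be - ga) + n2 * (al - ga) = 0.
  rewrite -(sum_fcoord v); under eq_bigr do rewrite hx.
  by rewrite (sum_ind2_fun _ _ (fun t => ga + t) dis); ring.
have ga0 : ga < 0 by nra.
have ga0' : ga != 0 by rewrite lt_eqF.
set a := (be - ga) / (-4 * ga); set b := (al - ga) / (-4 * ga).
have a0 : 0 < a by rewrite divr_gt0 //; lra.
have ab : a < b by rewrite ltr_pM2r ?invr_gt0; lra.
have e : n1 * a + n2 * b = 1.
  have -> : n1 * a + n2 * b = (n1 * (be - ga) + n2 * (al - ga)) / (-4 * ga).
    by rewrite /a /b; field.
  by rewrite (_ : n1 * (be - ga) + n2 * (al - ga) = -4 * ga) ?divff //; lra.
have hvK : v = (-3 * ga) *: sumv2 K1 K2 a b.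
  by apply: fcoord_inj => k; rewrite fcoordZ fcoord_sumv2 // hx /a /b; field.
have ga_ : g d a = 4 * lam * ga / ga ^+ d.-1 * a.
  by move: (hlev kb kg); rewrite eb eg => /(level_g om ga0').
have gb_ : g d b = 4 * lam * ga / ga ^+ d.-1 * b.
  by move: (hlev ka kg); rewrite ea eg => /(level_g om ga0').
have gg : g d a / a = g d b / b.
  by rewrite ga_ gb_ !mulfK // gt_eqF // (lt_trans a0 ab).
have /andP [as_ sb] := sstar_between hs a0 ab gg.
exists K1, K2, a, b; split.
  have b1 : b <= 1 by nra.
  by do !split => //; apply/card_gt0P; [exists kb | exists ka].
rewrite /vK2 -(dot_sumv2 dis e); apply: (unitv_scale hu _ hvK); lra.
Qed.

Lemma odd_eigenvector_vK d v mu : odd d -> (2 <= d)%N -> unitv v ->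
  Tapply d v = mu *: v -> exists K, condK K /\ v = vK K.
Proof.
move=> od d2 hu /Tapply_level hlev.
have em : ~~ odd d.-1 by case: d od {d2 hlev}.
have m0 : (0 < d.-1)%N by case: d d2 {od hlev em}.
have [km [kM [hm hM mM]]] := fcoord_extrema hu.
apply: (two_valued_vK hu mM) => k.
case: (eqVneq (fcoord v k) (fcoord v kM)) => [-> | nM]; first by left.
case: (eqVneq (fcoord v k) (fcoord v km)) => [-> | nm]; first by right.
have l1 : fcoord v km < fcoord v k by rewrite lt_neqAle eq_sym nm hm.
have l2 : fcoord v k < fcoord v kM by rewrite lt_neqAle nM hM.
by case: (powlin_even_no_level3 em m0 l1 l2 (hlev km k) (hlev k kM)).
Qed.

Lemma even_eigenvector d s v mu : ~~ odd d -> (4 <= d)%N -> is_sstar d s -> unitv v ->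
  Tapply d v = mu *: v ->
  (exists K, condK K /\ v = vK K) \/
  (exists K1 K2 a b, condK2 d s K1 K2 a b /\ v = vK2 K1 K2 a b).
Proof.
move=> ed d4 hs hu.
have om : odd d.-1 by case: d ed d4 hs => //= d; rewrite negbK.
have m3 : (3 <= d.-1)%N by case: d d4 {ed hs om}.
move=> /Tapply_level hlev.
have [km [kM [hm hM mM]]] := fcoord_extrema hu.
case: (pickP (fun k => (fcoord v k != fcoord v kM) && (fcoord v k != fcoord v km))).
- move=> k1 /andP [n1M n1m]; right.
  have l1 : fcoord v km < fcoord v k1 by rewrite lt_neqAle eq_sym n1m hm.
  have l2 : fcoord v k1 < fcoord v kM by rewrite lt_neqAle n1M hM.
  apply: (three_valued_vK2 om hs hu hlev l1 l2 _ erefl erefl erefl) => k.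
  case: (eqVneq (fcoord v k) (fcoord v kM)) => [-> | nM]; first by constructor 3.
  case: (eqVneq (fcoord v k) (fcoord v km)) => [-> | nm]; first by constructor 1.
  have l3 : fcoord v km < fcoord v k by rewrite lt_neqAle eq_sym nm hm.
  have l4 : fcoord v k < fcoord v kM by rewrite lt_neqAle nM hM.
  case: (ltgtP (fcoord v k) (fcoord v k1)) => [lt1 | gt1 | ->]; last by constructor 2.
  + by case: (powlin_odd_no_level4 om m3 l3 lt1 l2 (hlev km k) (hlev k k1) (hlev k1 kM)).
  + by case: (powlin_odd_no_level4 om m3 l1 gt1 l4 (hlev km k1) (hlev k1 k) (hlev k kM)).
- move=> none; left; apply: (two_valued_vK hu mM) => k.
  by move: (none k) => /negbT; rewrite negb_and !negbK => /orP [] /eqP ->; [left | right].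
Qed.

Lemma fcoord_wzero j k : fcoord (wzero j) k =
  sqrt3 / 3 * (if (k == o0) || (k == lift ord0 j) then 1 else -1).
Proof.
rewrite /wzero fcoordZ fcoordD /fcoord !dot_vk sqrt_4div3.
have := sqrt3_neq0 => r0.
by case: (ord3P j) => ->; case: (ord4P k) => -> /=; field; rewrite ?r0.
Qed.

Lemma wzero_of_fcoord v :
  (forall k, fcoord v k = sqrt3 / 3 \/ fcoord v k = - (sqrt3 / 3)) ->
  \sum_(k < 4) fcoord v k = 0 -> exists j, v = wzero j \/ v = - wzero j.
Proof.
move=> hv; rewrite big_ord4 => hs.
have t0 : 0 < sqrt3 / 3 by rewrite divr_gt0 // sqrt3_gt0.
case: (hv o0) => e0; case: (hv o1) => e1; case: (hv o2) => e2; case: (hv o3) => e3;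
  rewrite e0 e1 e2 e3 in hs; try lra.
all: [> exists 0; left | exists 1; left | exists 2; left
     | exists 2; right | exists 1; right | exists 0; right].
all: apply: fcoord_inj => k; rewrite ?fcoordN fcoord_wzero.
all: by case: (ord4P k) => -> /=; rewrite ?e0 ?e1 ?e2 ?e3; lra.
Qed.

Lemma eigenpair0_wzero d v : odd d -> (2 <= d)%N -> unitv v ->
  eigenpair d v 0 <-> exists j, v = wzero j \/ v = - wzero j.
Proof.
move=> od d2 hu; have em : ~~ odd d.-1 by case: d od {d2}.
have t0 : 0 <= sqrt3 / 3 by rewrite divr_ge0 // ltW // sqrt3_gt0.
split=> [[_ /Tapply_level hlev] | [j ej]].
- have m0 : (0 < d.-1)%N by case: d d2 {od em hlev}.
  apply: wzero_of_fcoord (sum_fcoord v) => k.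
  have nk l : `|fcoord v l| = `|fcoord v o0|.
    have := hlev l o0; rewrite !powlinE !mulr0 !mul0r !subr0 => h.
    by apply/eqP; rewrite -(eqrXn2 m0) ?normr_ge0 // -!normrX h.
  have n0 : `|fcoord v o0| = sqrt3 / 3.
    have := dot_fcoord v; rewrite (hu : dot v v = 1) big_ord4.
    rewrite -!(real_normK (num_real (fcoord v _))) !nk => h.
    apply/eqP; rewrite -(eqrXn2 (isT : (0 < 2)%N)) ?normr_ge0 //.
    by rewrite expr_div_n sqr_sqrt3; apply/eqP; lra.
  have := nk k; rewrite n0; case: (lerP 0 (fcoord v k)) => h.
    by rewrite ger0_norm // => ->; left.
  by rewrite ltr0_norm // => <-; rewrite opprK; right.
- split; first exact: unitv_neq0.
  rewrite -(mulr0 (4 / 3)); apply: (@Tapply_affine _ _ _ ((sqrt3 / 3) ^+ d.-1)) => k.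
  by rewrite mul0r add0r; case: ej => ->; rewrite ?fcoordN fcoord_wzero;
    case: ifP; rewrite ?mulr1 ?mulrN1 ?exprN_even.
Qed.

Lemma mu_odd_eq0 d K : odd d -> (2 <= d)%N -> condK K ->
  mu_odd (R := R) d K = 0 <-> #|K| = 2%N.
Proof.
move=> od d2 hK; have [n0 n4] := condK_card hK.
have m0 : d.-1 != 0%N by case: d od d2 => [|[|]].
have den0 : denK (R := R) d K != 0.
  by rewrite mulf_neq0 // expf_neq0 // gt_eqF // ?sqrt3_gt0 // sqrtr_gt0 mulr_gt0 // subr_gt0.
rewrite /mu_odd; split => [/eqP | ->]; last first.
  by rewrite (_ : 4 - 2%:R = 2%:R :> R) ?subrr ?mul0r //; lra.
rewrite mulf_eq0 invr_eq0 (negbTE den0) orbF subr_eq0 => /eqP e.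
move: hK e; rewrite /condK; case: #|K| => [|[|[|[|n]]]] //= _ e; exfalso.
- move: e; rewrite (_ : 4 - 1 = 3 :> R) ?expr1n; last lra.
  by move/eqP; rewrite pexprn_eq1 // (negbTE m0) /= => /eqP; lra.
- move: e; rewrite (_ : 4 - 3 = 1 :> R) ?expr1n; last lra.
  by move/eqP; rewrite eq_sym pexprn_eq1 // (negbTE m0) /= => /eqP; lra.
Qed.

Lemma dot_wzero i j : dot (wzero i) (wzero j) = (i == j)%:R :> R.
Proof.
have c2 : ((Num.sqrt (4 / 3))^-1) ^+ 2 = 3 / 4 :> R.
  by rewrite exprVn sqr_sqrtr ?invf_div //; lra.
rewrite /wzero dotZl dotZr mulrA -expr2 c2 dotDl 2!dotDr !dot_vk.
by case: (ord3P i) => ->; case: (ord3P j) => -> /=; lra.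
Qed.

Lemma row_free_wzero : row_free (\matrix_(j < 3) (wzero j : 'rV[R]_3)).
Proof.
rewrite row_free_unit; set M := \matrix_(j < 3) _.
suff MMt : M *m M^T = 1%:M by case: (mulmx1_unit MMt).
apply/matrixP => i j; rewrite !mxE -dot_wzero; apply: eq_bigr => l _.
by rewrite !mxE.
Qed.

Lemma Tapply2 v : Tapply 2 v = (4 / 3) *: v.
Proof. by rewrite -sum_fcoord_vk; apply: eq_bigr => k _; rewrite expr1. Qed.

End SimplexFrame.

Unset Implicit Arguments.
Set Strict Implicit.

Theorem mainTheorem10 (R : realType) (d : nat) (hd : (2 <= d)%N) :
  (* (i) *)
  (d = 2%N -> forall v : 'rV[R]_3, unitv v -> eigenpair d v (4 / 3))
  /\
  (* (ii) *)
  ((3 <= d)%N -> odd d ->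
     (forall v : 'rV[R]_3, unitv v ->
        ((exists mu, eigenpair d v mu) <->
         (exists K : {set 'I_4}, condK K /\ v = vK K)) /\
        (forall K : {set 'I_4}, condK K -> v = vK K ->
           eigenpair d v (mu_odd d K))) /\
     (forall K : {set 'I_4}, condK K -> (mu_odd (R:=R) d K = 0 <-> #|K| = 2%N)) /\
     (forall v : 'rV[R]_3, unitv v ->
        (eigenpair d v 0 <-> exists j : 'I_3, v = wzero j \/ v = - wzero j)) /\
     row_free (\matrix_(j < 3) (wzero j : 'rV[R]_3)))
  /\
  (* (iii) *)
  ((4 <= d)%N -> ~~ odd d -> forall sstar : R, is_sstar d sstar ->
     forall v : 'rV[R]_3, unitv v ->
       ((exists mu, eigenpair d v mu) <->
        ((exists K : {set 'I_4}, condK K /\ v = vK K) \/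
         (exists (K1 K2 : {set 'I_4}) (a b : R),
             condK2 d sstar K1 K2 a b /\ v = vK2 K1 K2 a b))) /\
       (forall K : {set 'I_4}, condK K -> v = vK K ->
          eigenpair d v (mu_even d K) /\ 0 < mu_even (R:=R) d K) /\
       (forall (K1 K2 : {set 'I_4}) (a b : R),
          condK2 d sstar K1 K2 a b -> v = vK2 K1 K2 a b ->
          eigenpair d v (mu_even2 d K1 K2 a b) /\ 0 < mu_even2 d K1 K2 a b)).
Proof.
split; [|split].
- by move=> -> v hu; split; [exact: unitv_neq0 | exact: Tapply2].
- move=> _ od; split; [|split; [|split]].
  + move=> v hu; split; last by move=> K hK ->; exact: eigenpair_vK_odd.
    split; first by case=> mu [_ hT]; exact: odd_eigenvector_vK od hd hu hT.
    by case=> K [hK ->]; exists (mu_odd d K); exact: eigenpair_vK_odd.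
  + by move=> K; exact: mu_odd_eq0.
  + by move=> v; exact: eigenpair0_wzero.
  + exact: row_free_wzero.
- move=> d4 ed sstar hs v hu; split; [|split].
  + split; first by case=> mu [_ hT]; exact: even_eigenvector ed d4 hs hu hT.
    case=> [[K [hK ->]] | [K1 [K2 [a [b [hc ->]]]]]].
    * by exists (mu_even d K); case: (eigenpair_vK_even R ed hd hK).
    * by exists (mu_even2 d K1 K2 a b); case: (eigenpair_vK2 ed hd hc).
  + by move=> K hK ->; apply: (eigenpair_vK_even R ed hd hK).
  + by move=> K1 K2 a b hc ->; exact: eigenpair_vK2 ed hd hc.
Qed.
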